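(* The reward-design problem (maximize $\sum_{i=1}^n x_i^*$ over feasible $(f,x_1^*,\dots,x_n^* )$) has the same optimal value as the linear program \[\begin{aligned}\text{maximize}\ & \sum_{i=1}^n x_i^*\\ \text{subject to}\ & 0\le x_i^*\le q_i,\quad i=1,\dots,n,\\ & 0\le x_1^*\le x_2^*\le\cdots\le x_n^*,\\ & C\left(\frac{x_n^*}{q_n}+\sum_{i=1}^{n-1}\left((n-i)\left(\frac{1}{q_i}-\frac{1}{q_{i+1}}\right)+\frac{1}{q_i}\right)x_i^*\right)\le B.\end{aligned}\] Moreover, if $(x_1^*,\dots,x_n^* )$ is an optimal solution of this linear program, then $(f,x_1^*,\dots,x_n^* )$ is an optimal solution of the reward-design problem, where $f(x)=0$ for $0\le x<x_1^*$ and, for $x_j^*\le x<x_{j+1}^*$ ($1\le j\le n$, $x_{n+1}^*=+\infty$), $f(x)=C\left(\sum_{t=1}^{j-1}\left(\frac{x_t^*}{q_t}-\frac{x_t^*}{q_{t+1}}\right)+\frac{x_j^*}{q_j}\right)$.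
   Context: There are $n$ agents with types $0<q_1\le q_2\le\cdots\le q_n$, a cost constant $C>0$ and a budget $B>0$. A reward function is a map $f:[0,\infty)\to[0,\infty)$; agent $i$'s utility for producing quality $x$ is $u_i(x)=f(x)-xC/q_i$. A tuple $(f,x_1^*,\dots,x_n^* )$ is feasible for the reward-design problem if for each $i$: $0\le x_i^*\le q_i$ and $u_i(x_i^* )\ge u_i(x)$ for all $x\in[0,q_i]$, and $\sum_{i=1}^n f(x_i^* )\le B$. The reward-design problem is to maximize $\sum_{i=1}^n x_i^*$ over feasible tuples. *)

(* R : realType. Agents are indexed 1..n (as in the paper);
   sequences are functions nat -> R, only indices 1..n matter. *)
From mathcomp Require Import all_boot all_order all_algebra.
From mathcomp Require Import reals.
Set Implicit Arguments. Unset Strict Implicit. Unset Printing Implicit Defensive.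
Import Order.TTheory GRing.Theory Num.Theory.
Local Open Scope ring_scope.

Section Defs.
Variable R : realType.

Definition utility (C qi : R) (f : R -> R) (x : R) : R := f x - x * C / qi.

(* f is a reward function [0,oo) -> [0,oo) (values on negatives irrelevant) *)
Definition reward_fun (f : R -> R) : Prop := forall t, 0 <= t -> 0 <= f t.

Definition RD_feasible (n : nat) (q : nat -> R) (C B : R)
  (f : R -> R) (x : nat -> R) : Prop :=
  reward_fun f /\
  (forall i, (1 <= i <= n)%N ->
     (0 <= x i /\ x i <= q i) /\
     (forall y, 0 <= y -> y <= q i -> utility C (q i) f y <= utility C (q i) f (x i))) /\
  \sum_(1 <= i < n.+1) f (x i) <= B.

Definition sum_quality (n : nat) (x : nat -> R) : R := \sum_(1 <= i < n.+1) x i.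

Definition LP_feasible (n : nat) (q : nat -> R) (C B : R) (x : nat -> R) : Prop :=
  (forall i, (1 <= i <= n)%N -> 0 <= x i /\ x i <= q i) /\
  0 <= x 1%N /\
  (forall i, (1 <= i < n)%N -> x i <= x i.+1) /\
  C * (x n / q n +
       \sum_(1 <= i < n) (((n - i)%:R * (1 / q i - 1 / q i.+1) + 1 / q i) * x i))
    <= B.

Definition LP_optimal (n : nat) (q : nat -> R) (C B : R) (x : nat -> R) : Prop :=
  LP_feasible n q C B x /\
  forall y, LP_feasible n q C B y -> sum_quality n y <= sum_quality n x.

(* The relevant j is the largest j in 1..n with x_j <= t (0 if none). *)
Definition opt_reward (n : nat) (q : nat -> R) (C : R) (x : nat -> R) (t : R) : R :=
  let j := \big[maxn/0%N]_(1 <= k < n.+1 | (x k <= t)%R) k in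
  if j == 0%N then 0
  else C * (\sum_(1 <= s < j) (x s / q s - x s / q s.+1) + x j / q j).

End Defs.

(* Agents with a higher type never produce less in equilibrium: when each of
   agents i and j can imitate the other, adding their incentive constraints
   gives (y_j - y_i) C (1/q_i - 1/q_j) >= 0.  Hence ranking agents by type, ties
   broken by quality, turns any equilibrium y into a nondecreasing vector with
   the same total quality.  Since agent j may imitate the agent attaining
   M_k = max_{i <= k} y_i for k < j, chaining the constraints shows that j
   earns at least the information rent C sum_{k<j} M_k (1/q_k - 1/q_{k+1});
   summing these rents over j bounds the budget from below by the cost of the
   linear program.  Conversely, for a feasible x of the linear program the
   staircase reward pays exactly these rents: agent i's payoff
   F_j - x_j C/q_i from the j-th step increases up to j = i and decreases
   afterwards, and the total payment is the cost of x.  An optimum of the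
   linear program exists because its feasible set is compact. *)

From mathcomp Require Import all_boot all_order all_algebra.
From mathcomp Require Import all_classical all_reals all_analysis.
From mathcomp Require Import zify ring.
Import Order.TTheory GRing.Theory Num.Theory.
Import numFieldNormedType.Exports.
Set Implicit Arguments.
Unset Strict Implicit.
Local Open Scope ring_scope.

Section NatRange.
Variable R : numDomainType.

Let range_convex a b :
  {in [pred k | a <= k <= b]%N &, forall i j k, (i < k < j)%N -> k \in [pred k | a <= k <= b]%N}.
Proof. by move=> i j; rewrite !inE => hi hj k hk; rewrite inE; lia. Qed.

Lemma nondecn_range (f : nat -> R) a b :
  (forall i, (a <= i < b)%N -> f i <= f i.+1) ->
  forall i j, (a <= i <= j)%N -> (j <= b)%N -> f i <= f j.
Proof.
move=> fS i j hij hjb.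
apply: (Order.NatMonotonyTheory.nondecn_inP (@range_convex a b)); rewrite ?inE; try lia.
by move=> k; rewrite !inE => hk hk1; apply: fS; lia.
Qed.

Lemma nonincn_range (f : nat -> R) a b :
  (forall i, (a <= i < b)%N -> f i.+1 <= f i) ->
  forall i j, (a <= i <= j)%N -> (j <= b)%N -> f j <= f i.
Proof.
move=> fS i j hij hjb.
apply: (Order.NatMonotonyTheory.nonincn_inP (@range_convex a b)); rewrite ?inE; try lia.
by move=> k; rewrite !inE => hk hk1; apply: fS; lia.
Qed.

Lemma sum_prefix_sums (a : nat -> R) m :
  \sum_(1 <= i < m.+1) \sum_(1 <= s < i) a s = \sum_(1 <= s < m) (m - s)%:R * a s.
Proof.
elim: m => [|m IH]; first by rewrite !big_geq.
rewrite big_nat_recr //= IH.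
case: m IH => [|m] IH; first by rewrite !big_geq ?addr0.
rewrite [RHS]big_nat_recr //= [X in _ + X = _]big_nat_recr //= subSnn mul1r addrA.
congr (_ + _); rewrite -big_split /=; apply: eq_big_nat => s hs.
by rewrite [in RHS]subSn 1?ltnW ?(andP hs).2 // -natr1 mulrDl mul1r.
Qed.

End NatRange.

Section AgentTypes.
Variables (R : realType) (n : nat) (q : nat -> R).

Definition dq k := (q k)^-1 - (q k.+1)^-1.

Definition lp_cost (C : R) (w : nat -> R) : R :=
  C * (w n / q n +
       \sum_(1 <= i < n) (((n - i)%:R * (1 / q i - 1 / q i.+1) + 1 / q i) * w i)).

Lemma sum_dq i j : (i <= j)%N -> \sum_(i <= k < j) dq k = (q i)^-1 - (q j)^-1.
Proof.
move=> hij; rewrite -[LHS]opprK -sumrN.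
under eq_bigr do rewrite opprB.
by rewrite telescope_sumr // opprB.
Qed.

Lemma lp_costE C w : (0 < n)%N ->
  lp_cost C w = C * \sum_(1 <= i < n.+1) w i / q i +
                C * \sum_(1 <= i < n) (n - i)%:R * (w i * dq i).
Proof.
move=> n_gt0; rewrite -mulrDr big_nat_recr //= addrAC addrC.
congr (_ * (_ + _)); rewrite -big_split; apply: eq_bigr => i _ /=; rewrite /dq; ring.
Qed.

Hypothesis q1_gt0 : 0 < q 1%N.
Hypothesis q_nondecr : forall i, (1 <= i < n)%N -> q i <= q i.+1.

Lemma q_le i j : (1 <= i <= j)%N -> (j <= n)%N -> q i <= q j.
Proof. exact: nondecn_range. Qed.

Lemma q_gt0 i : (1 <= i <= n)%N -> 0 < q i.
Proof. by move=> hi; apply: (lt_le_trans q1_gt0); apply: q_le; lia. Qed.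

Lemma invq_le i j : (1 <= i <= j)%N -> (j <= n)%N -> (q j)^-1 <= (q i)^-1.
Proof.
move=> hij hjn; rewrite lef_pV2 ?posrE ?q_le ?q_gt0 //; lia.
Qed.

Lemma dq_ge0 k : (1 <= k < n)%N -> 0 <= dq k.
Proof. by move=> hk; rewrite subr_ge0 invq_le //; lia. Qed.

End AgentTypes.

Section Staircase.
Variables (R : realType) (n : nat) (q : nat -> R) (C B : R) (x : nat -> R).
Hypothesis n_gt0 : (0 < n)%N.
Hypothesis q1_gt0 : 0 < q 1%N.
Hypothesis q_nondecr : forall i, (1 <= i < n)%N -> q i <= q i.+1.
Hypothesis C_gt0 : 0 < C.
Hypothesis x_feasible : LP_feasible n q C B x.

Let x_bounds i : (1 <= i <= n)%N -> 0 <= x i /\ x i <= q i.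
Proof. by case: x_feasible => + _; apply. Qed.

Let x_le i j : (1 <= i <= j)%N -> (j <= n)%N -> x i <= x j.
Proof. by case: x_feasible => _ [_ [x_nondecr _]]; apply: nondecn_range. Qed.

Let q_gt0 := q_gt0 q1_gt0 q_nondecr.
Let invq_le := invq_le q1_gt0 q_nondecr.

Definition stair j := C * (\sum_(1 <= s < j) (x s / q s - x s / q s.+1) + x j / q j).

Definition level t := \big[maxn/0%N]_(1 <= k < n.+1 | x k <= t) k.

Lemma opt_rewardE t :
  opt_reward n q C x t = if level t == 0%N then 0 else stair (level t).
Proof. by []. Qed.

Lemma levelP t : (level t <= n)%N /\ (level t = 0%N \/ (0 < level t)%N /\ x (level t) <= t).
Proof.
rewrite /level big_nat_cond.
elim/big_ind: _ => [|a b [an ha] [bn hb]|k /andP[hk xk]]; first by split=> //; left.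
- by rewrite /maxn; case: ifP.
- by split; [lia | right; split; [lia |]].
Qed.

Lemma level_max t k : (1 <= k <= n)%N -> x k <= t -> (k <= level t)%N.
Proof. by move=> hk xk; apply: leq_bigmax_seq => //; rewrite mem_index_iota; lia. Qed.

Lemma stair_payoffS i j : (0 < j)%N ->
  (stair j.+1 - x j.+1 * C / q i) - (stair j - x j * C / q i) =
  C * (x j.+1 - x j) * ((q j.+1)^-1 - (q i)^-1).
Proof. by move=> j_gt0; rewrite /stair big_nat_recr //=; ring. Qed.

Lemma stair_tie i j : (1 <= i <= j)%N -> (j <= n)%N -> x i = x j -> stair i = stair j.
Proof.
elim: j => [|j IH] hij hjn xij; first lia.
have [<- //|neq_ij] := eqVneq i j.+1.
have xji : x j = x i by apply/eqP; rewrite eq_le {1}xij !x_le //; lia.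
rewrite IH ?xji //; [|lia..].
by rewrite /stair big_nat_recr /=; [rewrite -xij -xji; ring | lia].
Qed.

Lemma opt_reward_at i : (1 <= i <= n)%N -> opt_reward n q C x (x i) = stair i.
Proof.
move=> hi; rewrite opt_rewardE.
have le_i_level := level_max hi (lexx _).
have [level_n [level0|[level_gt0 x_level]]] := levelP (x i); first lia.
rewrite ifN_eq; last lia.
by apply/esym/stair_tie; [lia | lia | apply/eqP; rewrite eq_le x_level x_le //; lia].
Qed.

Lemma stair_ge_cost j : (1 <= j <= n)%N -> x j * C / q j <= stair j.
Proof.
move=> hj; rewrite /stair mulrDr mulrAC mulrC lerDr.
apply: mulr_ge0; first exact: ltW.
rewrite big_nat_cond; apply: sumr_ge0 => s /andP[hs _].
have /x_bounds[x_ge0 _] : (1 <= s <= n)%N by lia.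
by rewrite -mulrBr mulr_ge0 // subr_ge0 invq_le //; lia.
Qed.

Lemma stair_ge0 j : (1 <= j <= n)%N -> 0 <= stair j.
Proof.
move=> hj; apply: le_trans (stair_ge_cost hj).
have [x_ge0 _] := x_bounds hj.
by rewrite !mulr_ge0 ?invr_ge0 ?(ltW C_gt0) ?(ltW (q_gt0 hj)).
Qed.

Lemma stair_payoff_le i j : (1 <= i <= n)%N -> (1 <= j <= n)%N ->
  stair j - x j * C / q i <= stair i - x i * C / q i.
Proof.
move=> hi hj.
have dx_ge0 k : (1 <= k < n)%N -> 0 <= C * (x k.+1 - x k).
  by move=> hk; rewrite mulr_ge0 ?(ltW C_gt0) // subr_ge0 x_le //; lia.
have [le_ji|lt_ij] := leqP j i.
- apply: (nondecn_range (f := fun k => stair k - x k * C / q i) (a := 1%N) (b := i));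
    [move=> k hk | lia..].
  rewrite -subr_ge0 stair_payoffS; last lia.
  by rewrite mulr_ge0 ?dx_ge0 // ?subr_ge0 ?invq_le //; lia.
- apply: (nonincn_range (f := fun k => stair k - x k * C / q i) (a := i) (b := n));
    [move=> k hk | lia..].
  rewrite -subr_le0 stair_payoffS; last lia.
  by rewrite mulr_ge0_le0 ?dx_ge0 // ?subr_le0 ?invq_le //; lia.
Qed.

Lemma sum_stair : \sum_(1 <= i < n.+1) stair i = lp_cost n q C x.
Proof.
rewrite lp_costE // /stair -mulr_sumr big_split /= mulrDr addrC; congr (_ + _).
by rewrite sum_prefix_sums; congr (_ * _); apply: eq_bigr => i _; rewrite /dq; ring.
Qed.

Lemma opt_reward_feasible : RD_feasible n q C B (opt_reward n q C x) x.
Proof.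
split; [|split].
- move=> t _; rewrite opt_rewardE.
  have [level_n [->|[level_gt0 _]]] := levelP t; first by [].
  by rewrite ifN_eq; [apply: stair_ge0 | ]; lia.
- move=> i hi; split; first exact: x_bounds.
  move=> t t_ge0 _; rewrite /utility opt_reward_at // opt_rewardE.
  have [level_n [->|[level_gt0 x_level]]] := levelP t.
    rewrite eqxx sub0r; apply: le_trans (_ : 0 <= _); last first.
      by rewrite subr_ge0 stair_ge_cost.
    by rewrite oppr_le0 !mulr_ge0 ?invr_ge0 ?(ltW C_gt0) ?(ltW (q_gt0 hi)).
  have level_range : (1 <= level t <= n)%N by lia.
  rewrite ifN_eq; last lia.
  apply: le_trans (stair_payoff_le hi level_range).
  rewrite lerD2l lerN2 ler_wpM2r ?invr_ge0 ?(ltW (q_gt0 hi)) //.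
  by rewrite ler_wpM2r ?(ltW C_gt0).
- rewrite (eq_big_nat _ _ (F2 := stair)); last by move=> i hi; apply: opt_reward_at; lia.
  by rewrite sum_stair; case: x_feasible => _ [_ []].
Qed.

End Staircase.

Section Equilibrium.
Variables (R : realType) (n : nat) (q : nat -> R) (C B : R) (f : R -> R) (y : nat -> R).
Hypothesis n_gt0 : (0 < n)%N.
Hypothesis q1_gt0 : 0 < q 1%N.
Hypothesis q_nondecr : forall i, (1 <= i < n)%N -> q i <= q i.+1.
Hypothesis C_gt0 : 0 < C.
Hypothesis y_feasible : RD_feasible n q C B f y.

Let y_bounds i : (1 <= i <= n)%N -> 0 <= y i /\ y i <= q i.
Proof. by case: y_feasible => _ [+ _] hi => /(_ i hi) []. Qed.

Let y_best i : (1 <= i <= n)%N -> forall t : R, 0 <= t -> t <= q i ->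
  utility C (q i) f t <= utility C (q i) f (y i).
Proof. by case: y_feasible => _ [+ _] hi => /(_ i hi) []. Qed.

Let q_le := q_le q_nondecr.
Let q_gt0 := q_gt0 q1_gt0 q_nondecr.
Let dq_ge0 := dq_ge0 q1_gt0 q_nondecr.

Definition payoff i := utility C (q i) f (y i).

Lemma payoff_ge0 i : (1 <= i <= n)%N -> 0 <= payoff i.
Proof.
move=> hi; have [y_ge0 y_le] := y_bounds hi.
apply: le_trans (y_best hi (lexx 0) (le_trans y_ge0 y_le)).
by rewrite /utility !mul0r subr0; case: y_feasible => f_ge0 _; apply: f_ge0.
Qed.

Lemma payoff_ge_imitation i j : (1 <= i <= j)%N -> (j <= n)%N ->
  payoff i + C * y i * ((q i)^-1 - (q j)^-1) <= payoff j.
Proof.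
move=> hij hjn; have hj : (1 <= j <= n)%N by lia.
have /y_bounds[y_ge0 y_le] : (1 <= i <= n)%N by lia.
have -> : payoff i + C * y i * ((q i)^-1 - (q j)^-1) = utility C (q j) f (y i).
  by rewrite /payoff /utility; ring.
exact (y_best hj y_ge0 (le_trans y_le (q_le hij hjn))).
Qed.

Lemma y_le_of_q_lt i j : (1 <= i <= n)%N -> (1 <= j <= n)%N -> q i < q j -> y i <= y j.
Proof.
move=> hi hj lt_q.
have [yi_ge0 yi_le] := y_bounds hi; have [yj_ge0 yj_le] := y_bounds hj.
have [yj_le_qi|lt_qi_yj] := leP (y j) (q i); last exact: le_trans yi_le (ltW lt_qi_yj).
have dinv_gt0 : 0 < C * ((q i)^-1 - (q j)^-1).
  by rewrite mulr_gt0 // subr_gt0 ltf_pV2 ?posrE ?q_gt0.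
rewrite -subr_ge0 -(pmulr_lge0 _ dinv_gt0).
have -> : (y j - y i) * (C * ((q i)^-1 - (q j)^-1)) =
    (utility C (q i) f (y i) - utility C (q i) f (y j)) +
    (utility C (q j) f (y j) - utility C (q j) f (y i)) by rewrite /utility; ring.
by rewrite addr_ge0 // subr_ge0 y_best // (le_trans yi_le) // ltW.
Qed.

Fixpoint runmax k := if k is k'.+1 then Num.max (runmax k') (y k) else 0.

Lemma le_runmax i k : (1 <= i <= k)%N -> y i <= runmax k.
Proof.
elim: k => [|k IH] hik; first lia.
rewrite /= le_max; have [->|neq_ik] := eqVneq i k.+1; first by rewrite lexx orbT.
by rewrite IH //; lia.
Qed.

Lemma runmax_le k k' : (k <= k')%N -> runmax k <= runmax k'.
Proof.
by apply: (Order.NatMonotonyTheory.nondecnP (f := runmax)) => m; rewrite /= le_max lexx.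
Qed.

Lemma runmax_attained k : (1 <= k <= n)%N -> exists2 i, (1 <= i <= k)%N & runmax k = y i.
Proof.
elim: k => [|[|k] IH] hk; first lia.
  have /y_bounds[y1_ge0 _] : (1 <= 1 <= n)%N by lia.
  by exists 1%N; rewrite //= max_r.
have [i hi max_i] := IH ltac:(lia).
have -> : runmax k.+2 = Num.max (runmax k.+1) (y k.+2) by [].
rewrite maxEle; case: ifP => _; first by exists k.+2; rewrite ?leqnn.
by exists i; first lia.
Qed.

Lemma payoff_ge_rent j : (1 <= j <= n)%N ->
  C * \sum_(1 <= k < j) runmax k * dq q k <= payoff j.
Proof.
elim/ltn_ind: j => j IH hj.
case: j IH hj => [|[|j]] IH hj; first lia.
  by rewrite big_geq // mulr0 payoff_ge0.
have [i hi max_i] := runmax_attained (ltac:(lia) : (1 <= j.+1 <= n)%N).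
have hij : (1 <= i <= j.+2)%N by lia.
apply: le_trans (payoff_ge_imitation hij ltac:(lia)).
rewrite (big_cat_nat _ (n := i)) /= 1?mulrDr; [|lia..].
apply: lerD; first by apply: IH; lia.
rewrite -mulrA ler_wpM2l ?(ltW C_gt0) // -sum_dq; last lia.
rewrite mulr_sumr; apply: ler_sum_nat => k hk.
by rewrite ler_wpM2r ?dq_ge0 -?max_i ?runmax_le //; lia.
Qed.

(* Ties in type are broken by quality, so that ranked qualities are nondecreasing. *)
Definition type_le : rel nat := fun i j => (q i < q j) || (q i == q j) && (y i <= y j).

Lemma type_le_total : total type_le.
Proof. by move=> i j; rewrite /type_le; case: ltgtP => //= _; exact: le_total. Qed.

Lemma type_le_trans : transitive type_le.
Proof.
move=> j i k; rewrite /type_le => /orP[lt_ij|/andP[/eqP eq_ij le_ij]] /orP[lt_jk|/andP[/eqP eq_jk le_jk]].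
- by rewrite (lt_trans lt_ij lt_jk).
- by rewrite -eq_jk lt_ij.
- by rewrite eq_ij lt_jk.
- by rewrite eq_ij eq_jk eqxx (le_trans le_ij le_jk) orbT.
Qed.

Lemma type_le_refl : reflexive type_le.
Proof. by move=> i; rewrite /type_le eqxx lexx orbT. Qed.

Definition ranking := sort type_le (index_iota 1 n.+1).

Definition ranked k := nth 0%N ranking k.-1.

Lemma perm_ranking : perm_eq ranking (index_iota 1 n.+1).
Proof. by rewrite perm_sort. Qed.

Lemma size_ranking : size ranking = n.
Proof. by rewrite (perm_size perm_ranking) size_iota subn1. Qed.

Lemma ranked_range k : (1 <= k <= n)%N -> (1 <= ranked k <= n)%N.
Proof.
move=> hk; have : ranked k \in ranking by rewrite mem_nth // size_ranking; lia.
by rewrite (perm_mem perm_ranking) mem_index_iota; lia.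
Qed.

Lemma q_ranked k : (1 <= k <= n)%N -> q (ranked k) = q k.
Proof.
move=> hk.
have sorted_ranking : sorted <=%R (map q ranking).
  rewrite sorted_map; apply: sub_sorted (sort_sorted type_le_total _).
  by move=> i j; rewrite /relpre /= => /orP[/ltW //|/andP[/eqP-> _]].
have sorted_agents : sorted <=%R (map q (index_iota 1 n.+1)).
  rewrite sorted_map; apply: (@sub_in_sorted _ (fun i => (1 <= i <= n)%N) leq).
  - by move=> i j hi hj hij; apply: q_le; lia.
  - by apply/allP => i; rewrite mem_index_iota.
  - exact: iota_sorted.
have := congr1 (nth 0 ^~ k.-1)
  (sorted_eq le_trans le_anti sorted_ranking sorted_agents (perm_map q perm_ranking)).
rewrite /= !(nth_map 0%N) ?size_ranking ?size_iota; [|lia..].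
by move=> ->; rewrite nth_iota ?add1n ?prednK //; lia.
Qed.

Lemma sum_ranked (G : nat -> R) :
  \sum_(1 <= k < n.+1) G (ranked k) = \sum_(1 <= i < n.+1) G i.
Proof.
rewrite big_add1 /= -[RHS](perm_big _ perm_ranking) /=.
by rewrite [RHS](big_nth 0%N) size_ranking.
Qed.

Definition y_ranked k := y (ranked k).

Lemma y_ranked_nondecr k : (1 <= k < n)%N -> y_ranked k <= y_ranked k.+1.
Proof.
move=> hk.
have : type_le (ranked k) (ranked k.+1).
  apply: (sorted_leq_nth type_le_trans type_le_refl 0%N (sort_sorted type_le_total _));
    rewrite ?inE ?size_ranking /=; lia.
case/orP => [lt_q|/andP[_ //]].
by apply: y_le_of_q_lt lt_q; apply: ranked_range; lia.
Qed.

Lemma y_ranked_dq_le k : (1 <= k < n)%N -> y_ranked k * dq q k <= runmax k * dq q k.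
Proof.
move=> hk; have hk' : (1 <= k <= n)%N by lia.
have := ranked_range hk'.
have [le_rk|lt_kr] := leqP (ranked k) k => hr.
  by rewrite ler_wpM2r ?dq_ge0 // le_runmax //; lia.
have eq_q : q k.+1 = q k.
  by apply/eqP; rewrite eq_le q_nondecr // -(q_ranked hk') q_le //; lia.
by rewrite /dq eq_q subrr !mulr0.
Qed.

Lemma sum_quality_ranked : sum_quality n y_ranked = sum_quality n y.
Proof. exact: sum_ranked. Qed.

Lemma y_ranked_feasible : LP_feasible n q C B y_ranked.
Proof.
have bounds k : (1 <= k <= n)%N -> 0 <= y_ranked k /\ y_ranked k <= q k.
  by move=> hk; rewrite -(q_ranked hk); apply/y_bounds/ranked_range.
split; first exact: bounds.
split; first by have /bounds[] : (1 <= 1 <= n)%N by lia.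
split; first exact: y_ranked_nondecr.
rewrite -/(lp_cost n q C y_ranked) lp_costE //.
case: y_feasible => _ [_]; apply: le_trans.
have -> : \sum_(1 <= i < n.+1) f (y i) =
    C * \sum_(1 <= i < n.+1) y i / q i + \sum_(1 <= i < n.+1) payoff i.
  by rewrite mulr_sumr -big_split; apply: eq_bigr => i _ /=; rewrite /payoff /utility; ring.
apply: lerD.
  rewrite -(sum_ranked (fun i => y i / q i)) ler_wpM2l ?(ltW C_gt0) //.
  by apply: ler_sum_nat => k hk; rewrite q_ranked ?lexx //; lia.
apply: (@le_trans _ _ (C * \sum_(1 <= k < n) (n - k)%:R * (runmax k * dq q k))).
  rewrite ler_wpM2l ?(ltW C_gt0) //; apply: ler_sum_nat => k hk.
  by rewrite ler_wpM2l ?ler0n // y_ranked_dq_le.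
rewrite -sum_prefix_sums mulr_sumr; apply: ler_sum_nat => j hj.
by apply: payoff_ge_rent; lia.
Qed.

End Equilibrium.

Section Continuity.
Local Open Scope classical_set_scope.
Variable R : realFieldType.

Lemma closed_le_continuous (T : topologicalType) (g h : T -> R) :
  continuous g -> continuous h -> closed [set v | g v <= h v].
Proof.
move=> g_cont h_cont.
have -> : [set v | g v <= h v] = (fun v => h v - g v) @^-1` [set r | 0 <= r].
  by apply/seteqP; split => v /=; rewrite subr_ge0.
apply: preimage_closed; last exact: closed_ge.
by move=> v _; apply: continuousB; [apply: h_cont | apply: g_cont].
Qed.

Lemma continuous_sumr (T : topologicalType) (I : Type) (r : seq I) (F : I -> T -> R) :
  (forall i, continuous (F i)) -> continuous (fun v => \sum_(i <- r) F i v).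
Proof.
move=> F_cont; apply: (@continuous_big R I +%R 0 xpredT) => [|i _].
  exact: add_continuous.
exact: F_cont.
Qed.

End Continuity.

Section LPOptimum.
Local Open Scope classical_set_scope.
Variables (R : realType) (n : nat) (q : nat -> R) (C B : R).
Hypothesis n_gt0 : (0 < n)%N.
Hypothesis q1_gt0 : 0 < q 1%N.
Hypothesis q_nondecr : forall i, (1 <= i < n)%N -> q i <= q i.+1.
Hypothesis B_ge0 : 0 <= B.

Lemma LP_feasible_ext (a b : nat -> R) : (forall k, (1 <= k <= n)%N -> a k = b k) ->
  LP_feasible n q C B a -> LP_feasible n q C B b.
Proof.
move=> eq_ab [bounds [a1_ge0 [a_nondecr cost]]]; split; [|split; [|split]].
- by move=> i hi; rewrite -eq_ab //; apply: bounds.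
- by rewrite -eq_ab //; lia.
- by move=> i hi; rewrite -!eq_ab; [apply: a_nondecr | lia..].
- rewrite -/(lp_cost n q C b); suff -> : lp_cost n q C b = lp_cost n q C a by [].
  rewrite /lp_cost -(eq_ab n); last lia.
  by congr (_ * (_ + _)); apply: eq_big_nat => i hi; rewrite eq_ab //; lia.
Qed.

Lemma sum_quality_ext (a b : nat -> R) : (forall k, (1 <= k <= n)%N -> a k = b k) ->
  sum_quality n a = sum_quality n b.
Proof. by move=> eq_ab; apply: eq_big_nat => k hk; apply: eq_ab. Qed.

Lemma LP_feasible0 : LP_feasible n q C B (fun=> 0).
Proof.
split; [|split; [|split]] => //.
- by move=> i hi; split; last exact/ltW/(q_gt0 q1_gt0 q_nondecr).
- by rewrite big1 ?mul0r ?addr0 ?mulr0 // => i _; rewrite mulr0.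
Qed.

Definition rV_seq (v : 'rV[R]_n.+1) : nat -> R := fun k => v ord0 (inord k).

Definition seq_rV (x : nat -> R) : 'rV[R]_n.+1 := \row_i (if i == ord0 then 0 else x i).

Lemma seq_rVK x k : (1 <= k <= n)%N -> rV_seq (seq_rV x) k = x k.
Proof.
by move=> hk; rewrite /rV_seq mxE -val_eqE /= inordK; [rewrite ifN_eq //; lia | lia].
Qed.

Lemma continuous_rV_seq k : continuous (fun v => rV_seq v k).
Proof. exact: coord_continuous. Qed.

Lemma closed_LP_feasible : closed [set v | LP_feasible n q C B (rV_seq v)].
Proof.
have cst_cont (r : R) : continuous (fun _ : 'rV[R]_n.+1 => r) by exact: cst_continuous.
apply: closedI; [apply: closed_bigI => i _; apply: closedI | apply: closedI; [|apply: closedI]].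
- exact: closed_le_continuous (cst_cont 0) (continuous_rV_seq (k := i)).
- exact: closed_le_continuous (continuous_rV_seq (k := i)) (cst_cont (q i)).
- exact: closed_le_continuous (cst_cont 0) (continuous_rV_seq (k := 1)).
- apply: closed_bigI => i _.
  exact: closed_le_continuous (continuous_rV_seq (k := i)) (continuous_rV_seq (k := i.+1)).
- apply: closed_le_continuous (cst_cont B) => v.
  apply: (continuousM (s := cst C) (t := fun v => rV_seq v n / q n + \sum_(1 <= i < n) _ * rV_seq v i)).
    exact: cst_continuous.
  apply: (continuousD (f := fun v => rV_seq v n / q n)); last first.
    apply: continuous_sumr => i w.
    apply: (continuousM (s := cst _) (t := rV_seq ^~ i)); first exact: cst_continuous.
    exact: continuous_rV_seq.
  apply: (continuousM (s := rV_seq ^~ n) (t := cst (q n)^-1)).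
    exact: continuous_rV_seq.
  exact: cst_continuous.
Qed.

Lemma LP_optimal_exists : exists x, LP_optimal n q C B x.
Proof.
(* Coordinate 0 is ignored by [rV_seq]; the box pins it to 0. *)
pose box := [set v : 'rV[R]_n.+1 | forall i, `[0, if i == ord0 then 0 else q i] (v ord0 i)].
pose S := box `&` [set v | LP_feasible n q C B (rV_seq v)].
have box_compact : compact box := rV_compact (fun i => @segment_compact R _ _).
have S_compact : compact S := compact_closedI box_compact closed_LP_feasible.
have S_seq_rV y : LP_feasible n q C B y -> S (seq_rV y).
  move=> y_feasible; split; last by apply: LP_feasible_ext y_feasible => k /seq_rVK.
  move=> i; rewrite /= mxE in_itv /=; case: eqP => [_|/eqP i_neq0]; first by rewrite lexx.
  have hi : (1 <= i <= n)%N by move: i_neq0 (ltn_ord i); rewrite -val_eqE /=; lia.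
  by case: y_feasible => /(_ i hi) [-> ->].
have S_nonempty : S !=set0 by exists (seq_rV (fun=> 0)); apply/S_seq_rV/LP_feasible0.
have sum_cont : continuous (fun v => sum_quality n (rV_seq v)).
  exact: continuous_sumr (fun i v => rV_seq v i) (fun i => continuous_rV_seq (k := i)).
have [c /set_mem[_ c_feasible] c_max] :=
  compact_EVT_max S_nonempty S_compact (continuous_subspaceT sum_cont).
exists (rV_seq c); split => // y y_feasible.
rewrite -(sum_quality_ext (seq_rVK y)); apply: c_max.
exact/mem_set/S_seq_rV.
Qed.

End LPOptimum.

Theorem theorem2 (R : realType) (n : nat) (q : nat -> R) (C B : R)
  (hn : (0 < n)%N)
  (hq1 : 0 < q 1%N)
  (hq : forall i, (1 <= i < n)%N -> q i <= q i.+1)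
  (hC : 0 < C) (hB : 0 < B) :
  (exists x : nat -> R, LP_optimal n q C B x) /\
  (forall x : nat -> R, LP_optimal n q C B x ->
     RD_feasible n q C B (opt_reward n q C x) x /\
     (forall (f : R -> R) (y : nat -> R),
        RD_feasible n q C B f y -> sum_quality n y <= sum_quality n x)).
Proof.
split; first exact: (LP_optimal_exists C hn hq1 hq (ltW hB)).
move=> x [x_feasible x_max]; split; first exact: opt_reward_feasible hn hq1 hq hC x_feasible.
move=> f y y_feasible.
rewrite -(sum_quality_ranked n q y).
exact/x_max/(y_ranked_feasible hn hq1 hq hC y_feasible).
Qed.
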